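(* Let $n \geqslant 5$ be odd and let $\lambda$ be a natural number with $\frac{n+3}{4} \leqslant \lambda \leqslant \frac{n-1}{2}$. Then the partition $\left(\lambda+1,\ \frac{n+3-2\lambda}{2},\ 2\times\left(\frac{n-1}{2}-\lambda\right),\ 1\times\frac{4\lambda-n-3}{2}\right)$ of $n$ corresponds to the eigenvalue $\lambda$.
   Context: In a partition, the notation $a\times t$ means that the part $a$ is repeated $t$ times (possibly $t=0$). An integer partition $(n_1,\dots,n_k)$ of $n$ (with $n_1\geqslant \dots\geqslant n_k\geqslant 1$, $\sum_j n_j=n$) is said to correspond to the eigenvalue $\lambda$ if $\lambda=\sum_{j=1}^k \frac{n_j(n_j-2j+1)}{2}$; this is the eigenvalue of the Transposition graph $T_n=\mathrm{Cay}(\mathrm{Sym}_n,T)$ ($T$ the set of all transpositions) associated with the irreducible character of $\mathrm{Sym}_n$ indexed by the partition. *)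

From mathcomp Require Import all_boot all_order all_algebra.
Set Implicit Arguments. Unset Strict Implicit. Unset Printing Implicit Defensive.
Import GRing.Theory Num.Theory.

Definition is_partition (n : nat) (s : seq nat) : bool :=
  [&& sorted geq s, all (fun x => 0 < x)%N s & sumn s == n].

(* lambda(s) = sum_{j=1}^k n_j (n_j - 2j + 1) / 2, computed in rat
   (the j-th part, 1-indexed, is nth 0 s (j-1)). *)
Definition part_eigenvalue (s : seq nat) : rat :=
  \sum_(i < size s)
     ((nth 0%N s i)%:R * ((nth 0%N s i)%:R - 2%:R * (i.+1)%:R + 1) / 2%:R)%R.

Definition corresponds_to (n : nat) (s : seq nat) (lam : rat) : Prop :=
  is_partition n s /\ part_eigenvalue s = lam.

From mathcomp Require Import all_boot all_order all_algebra.
From mathcomp Require Import zify ring.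
Import GRing.Theory Num.Theory.
Local Open Scope ring_scope.

(* Write n = 2m + 1, m = lam + a and lam = a + b + 2 (a, b >= 0 by the bounds
   on lam).  The partition becomes (a+b+3, a+2, 2^a, 1^b), a partition of
   4a + 2b + 5.  Its eigenvalue is a sum of per-row contributions; a block of
   k equal parts c starting after row j contributes a closed form in k, c, j,
   and adding up the four blocks gives a + b + 2 by a polynomial identity. *)

Definition eigen_term (j x : nat) : rat :=
  x%:R * (x%:R - 2%:R * j.+1%:R + 1) / 2%:R.

Fixpoint eigen_from (j : nat) (s : seq nat) : rat :=
  if s is x :: s' then eigen_term j x + eigen_from j.+1 s' else 0.

Lemma eigen_from_big j s :
  \sum_(i < size s) eigen_term (j + i) (nth 0%N s i) = eigen_from j s.
Proof.
elim: s j => [|x s IHs] j /=; first by rewrite big_ord0.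
rewrite big_ord_recl addn0 -IHs.
by congr (_ + _); apply: eq_bigr => i _; rewrite addnS.
Qed.

Lemma part_eigenvalueE s : part_eigenvalue s = eigen_from 0 s.
Proof. by rewrite -eigen_from_big. Qed.

Lemma eigen_from_cat j s1 s2 :
  eigen_from j (s1 ++ s2) = eigen_from j s1 + eigen_from (j + size s1) s2.
Proof.
elim: s1 j => [|x s1 IHs] j /=; first by rewrite add0r addn0.
by rewrite IHs addrA addnS.
Qed.

Lemma eigen_from_nseq j k c :
  eigen_from j (nseq k c) =
  k%:R * c%:R * (c%:R + 1) / 2%:R - c%:R * (k%:R * j%:R + k%:R * (k%:R + 1) / 2%:R).
Proof.
elim: k j => [|k IHk] j /=; first by ring.
by rewrite IHk /eigen_term; field.
Qed.

Lemma path_geq_nseq x k c : (c <= x)%N -> path geq x (nseq k c).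
Proof. by elim: k x => [|k IHk] x //= cx; rewrite cx IHk. Qed.

Lemma path_geq_nseq_cat x k c l d :
  (d <= c <= x)%N -> path geq x (nseq k c ++ nseq l d).
Proof.
case/andP=> dc cx; elim: k x cx => [|k IHk] x cx /=.
  by apply: path_geq_nseq; apply: leq_trans cx.
by rewrite cx IHk.
Qed.

Definition lemma5_shape (a b : nat) : seq nat :=
  [:: (a + b + 3)%N; (a + 2)%N] ++ nseq a 2%N ++ nseq b 1%N.

Lemma lemma5_shape_partition a b :
  is_partition (4 * a + 2 * b + 5) (lemma5_shape a b).
Proof.
rewrite /is_partition; apply/and3P; split.
- by apply/andP; split; [lia | apply: path_geq_nseq_cat; lia].
- by rewrite /= all_cat !all_nseq !orbT !addnS.
- by rewrite /= sumn_cat !sumn_nseq; apply/eqP; lia.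
Qed.

Lemma lemma5_shape_eigenvalue a b :
  part_eigenvalue (lemma5_shape a b) = (a + b + 2)%:R.
Proof.
rewrite part_eigenvalueE eigen_from_cat eigen_from_cat !eigen_from_nseq.
by rewrite /= /eigen_term size_nseq !natrD; field.
Qed.

Theorem lemma5 (n lam : nat) :
  (5 <= n)%N -> odd n -> (n + 3 <= 4 * lam)%N -> (2 * lam <= n - 1)%N ->
  corresponds_to n
    ([:: lam.+1; (n + 3 - 2 * lam)./2]
       ++ nseq ((n - 1)./2 - lam) 2%N
       ++ nseq ((4 * lam - n - 3)./2) 1%N)
    (lam%:R)%R.
Proof.
move=> _ odd_n lam_lo lam_hi. (* [5 <= n] follows from the bounds on [lam]. *)
have n_half : n = (n./2).*2.+1 by rewrite -[LHS]odd_double_half odd_n.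
have [a [b [lamE nE]]] : exists a b, lam = (a + b + 2)%N /\ n = (4 * a + 2 * b + 5)%N.
  by exists (n./2 - lam)%N, (2 * lam - n./2 - 2)%N; lia.
have -> : lam.+1 = (a + b + 3)%N by lia.
have -> : (n + 3 - 2 * lam)./2 = (a + 2)%N by lia.
have -> : ((n - 1)./2 - lam)%N = a by lia.
have -> : (4 * lam - n - 3)./2 = b by lia.
rewrite nE lamE; split; [exact: lemma5_shape_partition | exact: lemma5_shape_eigenvalue].
Qed.
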